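(* For each $0\ne a\in\mathbb{R}$, the translation operator $T_a:C^\infty(\mathbb{R},\mathbb{R})\to C^\infty(\mathbb{R},\mathbb{R})$, $T_a(f)(x)=f(x+a)$, is weakly mixing but does not support a hypercyclic algebra.
   Context: $C^\infty(\mathbb{R},\mathbb{R})$ is the Fréchet algebra (pointwise operations) of real-valued smooth functions on $\mathbb{R}$ with seminorms $p_k(f)=\max_{0\le j\le k}\max_{t\in[-k,k]}|f^{(j)}(t)|$. An operator $T$ is weakly mixing if $T\oplus T$ is topologically transitive (equivalently hypercyclic) on $X\times X$. $T$ supports a hypercyclic algebra if there is a subalgebra $A\ne\{0\}$ all of whose nonzero elements $f$ have dense orbit $\{T^nf:n\ge0\}$. *)

From Stdlib Require Import Reals.
From Coquelicot Require Import Coquelicot.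
Open Scope R_scope.

Definition smooth (f : R -> R) : Prop :=
  forall (n : nat) (x : R), ex_derive_n f n x.

(* Basic neighbourhood of f for the seminorm p_k:
   { g : p_k(g - f) < eps }, where
   p_k(h) = max_{0<=j<=k} max_{t in [-k,k]} |h^(j)(t)|.
   For smooth functions this max is attained (continuity on a compact),
   so p_k(g - f) < eps iff every term is < eps. *)
Definition pball (k : nat) (f : R -> R) (eps : R) (g : R -> R) : Prop :=
  forall (j : nat) (t : R), (j <= k)%nat -> - INR k <= t <= INR k ->
    Rabs (Derive_n g j t - Derive_n f j t) < eps.

Definition openX (U : (R -> R) -> Prop) : Prop :=
  forall f, smooth f -> U f ->
    exists (k : nat) (eps : R), 0 < eps /\
      forall g, smooth g -> pball k f eps g -> U g.

Definition nonemptyX (U : (R -> R) -> Prop) : Prop :=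
  exists f, smooth f /\ U f.

Definition openXX (W : (R -> R) * (R -> R) -> Prop) : Prop :=
  forall f1 f2, smooth f1 -> smooth f2 -> W (f1, f2) ->
    exists (k : nat) (eps : R), 0 < eps /\
      forall g1 g2, smooth g1 -> smooth g2 ->
        pball k f1 eps g1 -> pball k f2 eps g2 -> W (g1, g2).

Definition nonemptyXX (W : (R -> R) * (R -> R) -> Prop) : Prop :=
  exists f1 f2, smooth f1 /\ smooth f2 /\ W (f1, f2).

Definition transl (a : R) (f : R -> R) : R -> R := fun x => f (x + a).

(* Weak mixing: T (+) T is topologically transitive on X x X. *)
Definition weakly_mixing (T : (R -> R) -> (R -> R)) : Prop :=
  forall W1 W2, openXX W1 -> nonemptyXX W1 -> openXX W2 -> nonemptyXX W2 ->
    exists (n : nat) f1 f2, smooth f1 /\ smooth f2 /\ W1 (f1, f2) /\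
      W2 (Nat.iter n T f1, Nat.iter n T f2).

Definition dense_orbit (T : (R -> R) -> (R -> R)) (f : R -> R) : Prop :=
  forall U, openX U -> nonemptyX U -> exists n : nat, U (Nat.iter n T f).

Definition subalgebra (A : (R -> R) -> Prop) : Prop :=
  (forall f, A f -> smooth f) /\
  A (fun _ => 0) /\
  (forall f g, A f -> A g -> A (fun x => f x + g x)) /\
  (forall (c : R) f, A f -> A (fun x => c * f x)) /\
  (forall f g, A f -> A g -> A (fun x => f x * g x)).

Definition supports_hypercyclic_algebra (T : (R -> R) -> (R -> R)) : Prop :=
  exists A, subalgebra A /\ (exists f, A f /\ f <> (fun _ => 0)) /\
    forall f, A f -> f <> (fun _ => 0) -> dense_orbit T f.

From Stdlib Require Import Reals Factorial Lra Psatz FunctionalExtensionality.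
From Coquelicot Require Import Coquelicot.
Open Scope R_scope.

(* Weak mixing: given basic neighbourhoods of (g1, g2) and (h1, h2), which only
   see derivatives on a compact interval [-r, r], translate far enough that
   [-r, r] and [-r, r] + n a are disjoint and glue g_i to the translate of h_i
   with a smooth cutoff built from exp (-1/x).  No hypercyclic algebra: f^2 >= 0
   lies in the algebra and translation keeps it nonnegative, so its orbit never
   meets the open set {g | g 0 < -1}. *)

Fixpoint nderivable (n : nat) (f : R -> R) : Prop :=
  match n with
  | O => True
  | S m => (forall x, ex_derive f x) /\ nderivable m (Derive f)
  end.

Lemma Derive_n_S (f : R -> R) (n : nat) : Derive_n f (S n) = Derive_n (Derive f) n.
Proof.
  apply functional_extensionality; intros x.
  now rewrite <- Nat.add_1_r, <- Derive_n_comp.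
Qed.

Lemma smooth_nderivable (f : R -> R) : smooth f <-> forall n, nderivable n f.
Proof.
  split.
  - intros Hf n; revert f Hf; induction n as [|n IH]; intros f Hf; [exact I|].
    split; [exact (Hf 1%nat)|].
    apply IH; intros [|m] x; [exact I|].
    simpl; rewrite <- Derive_n_S; exact (Hf (S (S m)) x).
  - intros Hf n x; revert f Hf x; induction n as [|[|n] IH]; intros f Hf x.
    + exact I.
    + exact (proj1 (Hf 1%nat) x).
    + change (ex_derive (Derive_n f (S n)) x); rewrite Derive_n_S.
      apply (IH (Derive f)); intros m; exact (proj2 (Hf (S m))).
Qed.

Lemma nderivable_S (n : nat) (f : R -> R) : nderivable (S n) f -> nderivable n f.
Proof.
  revert f; induction n as [|n IH]; intros f [Df Hf]; [exact I|].
  split; [exact Df|]. now apply IH.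
Qed.

Lemma nderivable_ext (n : nat) (f g : R -> R) :
  (forall x, f x = g x) -> nderivable n f -> nderivable n g.
Proof. intros E; now replace g with f by (apply functional_extensionality; auto). Qed.

Lemma nderivable_of_derive (n : nat) (f f' : R -> R) :
  (forall x, is_derive f x (f' x)) -> nderivable n f' -> nderivable (S n) f.
Proof.
  intros Df Hf'. split; [intros x; eexists; apply Df|].
  apply (nderivable_ext n f'); [|exact Hf'].
  intros x; symmetry; apply is_derive_unique, Df.
Qed.

Lemma nderivable_const (n : nat) (c : R) : nderivable n (fun _ => c).
Proof.
  revert c; induction n as [|n IH]; intros c; [exact I|].
  apply (nderivable_of_derive n _ (fun _ => 0)); [intros x; exact (is_derive_const c x)|apply IH].
Qed.

Lemma nderivable_id (n : nat) : nderivable n (fun x => x).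
Proof.
  destruct n as [|n]; [exact I|].
  apply (nderivable_of_derive n _ (fun _ => 1)); [intros x; exact (is_derive_id x)|].
  apply nderivable_const.
Qed.

Lemma nderivable_plus (n : nat) (f g : R -> R) :
  nderivable n f -> nderivable n g -> nderivable n (fun x => f x + g x).
Proof.
  revert f g; induction n as [|n IH]; intros f g Hf Hg; [exact I|].
  destruct Hf as [Df Hf], Hg as [Dg Hg].
  apply (nderivable_of_derive n _ (fun x => Derive f x + Derive g x)); [|now apply IH].
  intros x; apply (is_derive_plus f g); now apply Derive_correct.
Qed.

Lemma nderivable_mult (n : nat) (f g : R -> R) :
  nderivable n f -> nderivable n g -> nderivable n (fun x => f x * g x).
Proof.
  revert f g; induction n as [|n IH]; intros f g Hf Hg; [exact I|].
  pose proof (nderivable_S n f Hf) as Hf0; pose proof (nderivable_S n g Hg) as Hg0.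
  destruct Hf as [Df Hf], Hg as [Dg Hg].
  apply (nderivable_of_derive n _ (fun x => Derive f x * g x + f x * Derive g x)).
  - intros x; apply (is_derive_mult f g); [now apply Derive_correct..|intros; apply Rmult_comm].
  - apply nderivable_plus; now apply IH.
Qed.

Lemma nderivable_comp (n : nat) (f u : R -> R) :
  nderivable n f -> nderivable n u -> nderivable n (fun x => f (u x)).
Proof.
  revert f u; induction n as [|n IH]; intros f u Hf Hu; [exact I|].
  pose proof (nderivable_S n u Hu) as Hu0.
  destruct Hf as [Df Hf], Hu as [Du Hu].
  apply (nderivable_of_derive n _ (fun x => Derive f (u x) * Derive u x)).
  - intros x; rewrite Rmult_comm.
    apply (is_derive_comp f u); now apply Derive_correct.
  - apply nderivable_mult; [now apply IH|exact Hu].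
Qed.

Lemma nderivable_inv (n : nat) (u : R -> R) :
  (forall x, u x <> 0) -> nderivable n u -> nderivable n (fun x => / u x).
Proof.
  intros Hu0; revert u Hu0; induction n as [|n IH]; intros u Hu0 Hu; [exact I|].
  pose proof (nderivable_S n u Hu) as Hun.
  destruct Hu as [Du Hu].
  apply (nderivable_of_derive n _ (fun x => -1 * Derive u x * (/ u x * / u x))).
  - intros x.
    replace (-1 * Derive u x * (/ u x * / u x)) with (- Derive u x / u x ^ 2)
      by (field; apply Hu0).
    apply is_derive_inv; [now apply Derive_correct|apply Hu0].
  - apply nderivable_mult; [apply nderivable_mult; [apply nderivable_const|exact Hu]|].
    apply nderivable_mult; now apply IH.
Qed.

Lemma smooth_ext (f g : R -> R) : (forall x, f x = g x) -> smooth f -> smooth g.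
Proof. intros E; now replace g with f by (apply functional_extensionality; auto). Qed.

Lemma smooth_const (c : R) : smooth (fun _ => c).
Proof. apply smooth_nderivable; intros n; apply nderivable_const. Qed.

Lemma smooth_plus (f g : R -> R) : smooth f -> smooth g -> smooth (fun x => f x + g x).
Proof. rewrite !smooth_nderivable; intros Hf Hg n; now apply nderivable_plus. Qed.

Lemma smooth_mult (f g : R -> R) : smooth f -> smooth g -> smooth (fun x => f x * g x).
Proof. rewrite !smooth_nderivable; intros Hf Hg n; now apply nderivable_mult. Qed.

Lemma smooth_comp (f u : R -> R) : smooth f -> smooth u -> smooth (fun x => f (u x)).
Proof. rewrite !smooth_nderivable; intros Hf Hu n; now apply nderivable_comp. Qed.

Lemma smooth_minus (f g : R -> R) : smooth f -> smooth g -> smooth (fun x => f x - g x).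
Proof.
  intros Hf Hg; apply (smooth_ext (fun x => f x + -1 * g x)); [intros x; ring|].
  apply smooth_plus; [exact Hf|apply smooth_mult; [apply smooth_const|exact Hg]].
Qed.

Lemma smooth_inv (u : R -> R) : (forall x, u x <> 0) -> smooth u -> smooth (fun x => / u x).
Proof. rewrite !smooth_nderivable; intros Hu0 Hu n; now apply nderivable_inv. Qed.

Inductive polyfun : (R -> R) -> Prop :=
  | polyfun_const c : polyfun (fun _ => c)
  | polyfun_id : polyfun (fun y => y)
  | polyfun_plus P Q : polyfun P -> polyfun Q -> polyfun (fun y => P y + Q y)
  | polyfun_mult P Q : polyfun P -> polyfun Q -> polyfun (fun y => P y * Q y).

Lemma smooth_polyfun (P : R -> R) : polyfun P -> smooth P.
Proof.
  intros HP; apply smooth_nderivable; intros n.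
  induction HP.
  - apply nderivable_const.
  - apply nderivable_id.
  - now apply nderivable_plus.
  - now apply nderivable_mult.
Qed.

Lemma smooth_transl (c : R) (f : R -> R) : smooth f -> smooth (transl c f).
Proof.
  intros Hf; apply (smooth_comp f (fun x => x + c)); [exact Hf|].
  apply smooth_polyfun; repeat constructor.
Qed.

Lemma polyfun_derive (P : R -> R) :
  polyfun P -> exists P', polyfun P' /\ forall y, is_derive P y (P' y).
Proof.
  induction 1 as [c| |P Q _ [P' [HP' DP]] _ [Q' [HQ' DQ]]|P Q HP [P' [HP' DP]] HQ [Q' [HQ' DQ]]].
  - exists (fun _ => 0); split; [constructor|intros y; exact (is_derive_const c y)].
  - exists (fun _ => 1); split; [constructor|intros y; exact (is_derive_id y)].
  - exists (fun y => P' y + Q' y); split; [now constructor|].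
    intros y; now apply (is_derive_plus P Q).
  - exists (fun y => P' y * Q y + P y * Q' y); split; [repeat constructor; auto|].
    intros y; apply (is_derive_mult P Q); auto; intros; apply Rmult_comm.
Qed.

Lemma polyfun_bound (P : R -> R) :
  polyfun P -> exists C N, 0 <= C /\ forall y, 1 <= y -> Rabs (P y) <= C * y ^ N.
Proof.
  induction 1 as [c| |P Q _ [C1 [N1 [HC1 B1]]] _ [C2 [N2 [HC2 B2]]]
                |P Q _ [C1 [N1 [HC1 B1]]] _ [C2 [N2 [HC2 B2]]]].
  - exists (Rabs c), 0%nat; split; [apply Rabs_pos|intros y _; simpl; lra].
  - exists 1, 1%nat; split; [lra|intros y Hy; rewrite Rabs_right; simpl; lra].
  - exists (C1 + C2), (Nat.max N1 N2); split; [lra|intros y Hy].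
    pose proof (Rle_pow y N1 (Nat.max N1 N2) Hy (Nat.le_max_l _ _)).
    pose proof (Rle_pow y N2 (Nat.max N1 N2) Hy (Nat.le_max_r _ _)).
    pose proof (Rabs_triang (P y) (Q y)).
    pose proof (B1 y Hy); pose proof (B2 y Hy).
    nra.
  - exists (C1 * C2), (N1 + N2)%nat; split; [nra|intros y Hy].
    rewrite Rabs_mult, pow_add.
    replace (C1 * C2 * (y ^ N1 * y ^ N2)) with ((C1 * y ^ N1) * (C2 * y ^ N2)) by ring.
    apply Rmult_le_compat; auto; apply Rabs_pos.
Qed.

Lemma pow_div_fact_le_exp (y : R) (n : nat) : 0 <= y -> y ^ n / INR (fact n) <= exp y.
Proof.
  intros Hy; eapply Rle_trans; [|exact (exp_ge_taylor y n Hy)].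
  destruct n as [|n]; [apply Rle_refl|].
  rewrite tech5.
  assert (0 <= sum_f_R0 (fun k => y ^ k / INR (fact k)) n); [|lra].
  apply cond_pos_sum; intros k.
  apply Rdiv_le_0_compat; [now apply pow_le|apply INR_fact_lt_0].
Qed.

Lemma pow_mul_exp_neg_le (N : nat) (y : R) :
  0 < y -> y ^ N * exp (- y) <= INR (fact (N + 2)) / y ^ 2.
Proof.
  intros Hy.
  pose proof (pow_div_fact_le_exp y (N + 2) (Rlt_le _ _ Hy)) as E.
  pose proof (INR_fact_lt_0 (N + 2)).
  pose proof (pow_lt y 2 Hy); pose proof (exp_pos y).
  rewrite exp_Ropp, pow_add in *.
  apply (Rmult_le_reg_r (y ^ 2 * exp y)); [nra|].
  apply (Rmult_le_reg_r (/ INR (fact (N + 2)))); [now apply Rinv_0_lt_compat|].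
  replace (y ^ N * / exp y * (y ^ 2 * exp y) * / INR (fact (N + 2)))
    with (y ^ N * y ^ 2 / INR (fact (N + 2))) by (field; lra).
  replace (INR (fact (N + 2)) / y ^ 2 * (y ^ 2 * exp y) * / INR (fact (N + 2)))
    with (exp y) by (field; lra).
  exact E.
Qed.

Lemma is_derive_0_of_sq_bound (f : R -> R) (C : R) :
  f 0 = 0 -> (forall h, Rabs h <= 1 -> Rabs (f h) <= C * h ^ 2) -> is_derive f 0 0.
Proof.
  intros f0 Hf; apply is_derive_Reals; intros eps Heps.
  pose proof (Rabs_pos C) as HC.
  set (d := Rmin 1 (eps / (Rabs C + 1))).
  assert (Hd : 0 < d) by (apply Rmin_pos; [lra|apply Rdiv_lt_0_compat; lra]).
  assert (Hde : d * (Rabs C + 1) <= eps).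
  { apply Rle_trans with (eps / (Rabs C + 1) * (Rabs C + 1)).
    - apply Rmult_le_compat_r; [lra|apply Rmin_r].
    - right; field; lra. }
  exists (mkposreal d Hd); intros h Hh0 Hh; simpl in Hh.
  pose proof (Rabs_pos_lt h Hh0) as Hhpos.
  assert (Hfh : Rabs (f h) <= Rabs C * Rabs h * Rabs h).
  { pose proof (Hf h (Rlt_le _ _ (Rlt_le_trans _ _ _ Hh (Rmin_l _ _)))) as B.
    rewrite <- pow2_abs in B; pose proof (Rle_abs C); simpl in B; nra. }
  replace ((f (0 + h) - f 0) / h - 0) with (f h / h) by (rewrite Rplus_0_l, f0; field; exact Hh0).
  apply (Rmult_lt_reg_r (Rabs h)); [exact Hhpos|].
  rewrite <- Rabs_mult; replace (f h / h * h) with (f h) by (field; exact Hh0).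
  assert (Rabs C * Rabs h <= Rabs C * d) by (apply Rmult_le_compat_l; lra).
  nra.
Qed.

Lemma locally_of_Rabs_lt (x e : R) (P : R -> Prop) :
  0 < e -> (forall t, Rabs (t - x) < e -> P t) -> locally x P.
Proof. intros He H; exists (mkposreal e He); intros t Ht; exact (H t Ht). Qed.

Definition flat (P : R -> R) (x : R) : R :=
  if Rlt_dec 0 x then P (/ x) * exp (- / x) else 0.

Lemma flat_nonpos (P : R -> R) (x : R) : x <= 0 -> flat P x = 0.
Proof. intros Hx; unfold flat; destruct (Rlt_dec 0 x); [lra|reflexivity]. Qed.

Lemma flat_pos (P : R -> R) (x : R) : 0 < x -> flat P x = P (/ x) * exp (- / x).
Proof. intros Hx; unfold flat; destruct (Rlt_dec 0 x); [reflexivity|lra]. Qed.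

Lemma flat_sq_bound (P : R -> R) :
  polyfun P -> exists C, forall h, Rabs h <= 1 -> Rabs (flat P h) <= C * h ^ 2.
Proof.
  intros HP; destruct (polyfun_bound P HP) as [C [N [HC B]]].
  pose proof (INR_fact_lt_0 (N + 2)) as Hfact.
  exists (C * INR (fact (N + 2))); intros h Hh.
  destruct (Rle_lt_dec h 0) as [Hh0|Hh0].
  - rewrite flat_nonpos, Rabs_R0 by exact Hh0.
    apply Rmult_le_pos; [nra|apply pow2_ge_0].
  - rewrite flat_pos by exact Hh0.
    assert (Hy : 1 <= / h).
    { rewrite <- Rinv_1; apply Rinv_le_contravar; [exact Hh0|].
      rewrite Rabs_right in Hh; lra. }
    pose proof (pow_mul_exp_neg_le N (/ h) ltac:(lra)) as E.
    pose proof (exp_pos (- / h)).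
    rewrite Rabs_mult, (Rabs_right (exp _)) by lra.
    apply Rle_trans with (C * (/ h ^ N * exp (- / h))).
    + rewrite <- Rmult_assoc; apply Rmult_le_compat_r; [lra|].
      rewrite <- pow_inv; exact (B _ Hy).
    + rewrite <- pow_inv.
      replace (C * INR (fact (N + 2)) * h ^ 2) with (C * (INR (fact (N + 2)) / (/ h) ^ 2))
        by (field; lra).
      apply Rmult_le_compat_l; [exact HC|exact E].
Qed.

Lemma is_derive_flat (P : R -> R) :
  polyfun P -> exists Q, polyfun Q /\ forall x, is_derive (flat P) x (flat Q x).
Proof.
  intros HP; destruct (polyfun_derive P HP) as [P' [HP' DP]].
  exists (fun y => y * y * (P y + -1 * P' y)); split; [repeat constructor; auto|].
  intros x; destruct (Rtotal_order x 0) as [Hx|[Hx|Hx]].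
  - rewrite flat_nonpos by lra.
    apply (is_derive_ext_loc (fun _ => 0)); [|exact (is_derive_const 0 x)].
    apply (locally_of_Rabs_lt x (- x)); [lra|]; intros t Ht.
    apply Rabs_def2 in Ht; rewrite flat_nonpos by lra; reflexivity.
  - subst x; rewrite flat_nonpos by lra.
    destruct (flat_sq_bound P HP) as [C HC].
    apply (is_derive_0_of_sq_bound _ C); [apply flat_nonpos; lra|exact HC].
  - apply (is_derive_ext_loc (fun t => P (/ t) * exp (- / t))).
    { apply (locally_of_Rabs_lt x x); [lra|]; intros t Ht.
      apply Rabs_def2 in Ht; rewrite flat_pos by lra; reflexivity. }
    assert (Dinv : is_derive (fun t => / t) x (- 1 / x ^ 2))
      by (apply (is_derive_inv (fun t => t)); [exact (is_derive_id x)|lra]).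
    assert (D1 : is_derive (fun t => P (/ t)) x (- 1 / x ^ 2 * P' (/ x)))
      by exact (is_derive_comp P (fun t => / t) x _ _ (DP (/ x)) Dinv).
    assert (D2 : is_derive (fun t => exp (- / t)) x (- (- 1 / x ^ 2) * exp (- / x)))
      by exact (is_derive_comp exp (fun t => - / t) x _ _ (is_derive_exp _)
                  (is_derive_opp _ _ _ Dinv)).
    assert (D := is_derive_mult _ _ x _ _ D1 D2 Rmult_comm).
    rewrite flat_pos by exact Hx.
    replace (/ x * / x * (P (/ x) + -1 * P' (/ x)) * exp (- / x))
      with (- 1 / x ^ 2 * P' (/ x) * exp (- / x) + P (/ x) * (- (- 1 / x ^ 2) * exp (- / x)))
      by (field; lra).
    exact D.
Qed.

Lemma smooth_flat (P : R -> R) : polyfun P -> smooth (flat P).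
Proof.
  intros HP; apply smooth_nderivable; intros n; revert P HP.
  induction n as [|n IH]; intros P HP; [exact I|].
  destruct (is_derive_flat P HP) as [Q [HQ DQ]].
  exact (nderivable_of_derive n _ _ DQ (IH Q HQ)).
Qed.

Lemma smooth_cutoff (r s : R) : 0 <= r < s ->
  exists beta, smooth beta /\ (forall x, Rabs x <= r -> beta x = 0) /\
    (forall x, s <= Rabs x -> beta x = 1).
Proof.
  intros Hrs.
  set (psi := flat (fun _ => 1)).
  assert (psi_nonpos : forall x, x <= 0 -> psi x = 0) by (intros; now apply flat_nonpos).
  assert (psi_pos : forall x, 0 < x -> 0 < psi x)
    by (intros x Hx; unfold psi; rewrite flat_pos, Rmult_1_l by exact Hx; apply exp_pos).
  assert (Hpsi : smooth psi) by (apply smooth_flat; constructor).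
  set (u := fun x => psi (x * x - r * r)); set (v := fun x => psi (s * s - x * x)).
  assert (Huv : forall x, 0 < u x + v x).
  { intros x; unfold u, v.
    assert (psi_nonneg : forall y, 0 <= psi y).
    { intros y; destruct (Rle_lt_dec y 0) as [Hy|Hy];
        [rewrite psi_nonpos by exact Hy; lra|now apply Rlt_le, psi_pos]. }
    destruct (Rle_lt_dec (x * x - r * r) 0) as [Hx|Hx].
    - pose proof (psi_pos (s * s - x * x) ltac:(nra)); pose proof (psi_nonneg (x * x - r * r)); lra.
    - pose proof (psi_pos _ Hx); pose proof (psi_nonneg (s * s - x * x)); lra. }
  exists (fun x => u x * / (u x + v x)); split; [|split].
  - assert (Hu : smooth u)
      by (apply (smooth_comp psi (fun x => x * x - r * r)); [exact Hpsi|];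
          apply smooth_polyfun; repeat constructor).
    assert (Hv : smooth v)
      by (apply (smooth_comp psi (fun x => s * s - x * x)); [exact Hpsi|];
          apply smooth_minus; [apply smooth_const|apply smooth_polyfun; repeat constructor]).
    apply smooth_mult; [exact Hu|].
    apply smooth_inv; [intros x; specialize (Huv x); lra|now apply smooth_plus].
  - intros x Hx.
    assert (x * x = Rabs x * Rabs x) by (rewrite <- Rabs_mult; symmetry; apply Rabs_pos_eq; nra).
    unfold u; rewrite psi_nonpos; [ring|].
    pose proof (Rabs_pos x); nra.
  - intros x Hx.
    assert (x * x = Rabs x * Rabs x) by (rewrite <- Rabs_mult; symmetry; apply Rabs_pos_eq; nra).
    assert (Hv0 : v x = 0) by (unfold v; apply psi_nonpos; nra).
    assert (Hu0 : 0 < u x) by (unfold u; apply psi_pos; nra).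
    rewrite Hv0, Rplus_0_r; field; lra.
Qed.

Lemma smooth_glue (g h : R -> R) (r L : R) :
  0 <= r -> 2 * r < Rabs L -> smooth g -> smooth h ->
  exists f, smooth f /\ (forall t, Rabs t < r -> f t = g t) /\
    (forall t, Rabs t < r -> f (t + L) = h t).
Proof.
  intros Hr HL Hg Hh.
  destruct (smooth_cutoff r (Rabs L - r)) as [beta [Hbeta [beta0 beta1]]]; [lra|].
  exists (fun x => g x + beta x * (h (x - L) - g x)); split; [|split].
  - apply smooth_plus; [exact Hg|apply smooth_mult; [exact Hbeta|apply smooth_minus; [|exact Hg]]].
    exact (smooth_transl (- L) h Hh).
  - intros t Ht; rewrite beta0 by lra; ring.
  - intros t Ht.
    pose proof (Rabs_triang (t + L) (- t)) as Htri.
    rewrite Rabs_Ropp in Htri; replace (t + L + - t) with L in Htri by ring.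
    rewrite beta1 by lra; replace (t + L - L) with t by ring; ring.
Qed.

Lemma pball_of_agree (k : nat) (f g : R -> R) (eps r : R) :
  0 < eps -> INR k < r -> (forall t, Rabs t < r -> g t = f t) -> pball k f eps g.
Proof.
  intros Heps Hk Hgf j t _ Ht.
  rewrite (Derive_n_ext_loc g f j t), Rminus_diag, Rabs_R0; [exact Heps|].
  apply (locally_of_Rabs_lt t (r - INR k)); [lra|]; intros s Hs; apply Hgf.
  apply Rabs_def2 in Hs; apply Rabs_def1; lra.
Qed.

Lemma iter_transl (a : R) (n : nat) (f : R -> R) :
  Nat.iter n (transl a) f = transl (INR n * a) f.
Proof.
  induction n as [|n IH].
  - apply functional_extensionality; intros x; unfold transl; simpl; f_equal; ring.
  - change (Nat.iter (S n) (transl a) f) with (transl a (Nat.iter n (transl a) f)).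
    rewrite IH; apply functional_extensionality; intros x; unfold transl.
    rewrite S_INR; f_equal; ring.
Qed.

Lemma transl_weakly_mixing (a : R) : a <> 0 -> weakly_mixing (transl a).
Proof.
  intros Ha W1 W2 HW1 [g1 [g2 [Hg1 [Hg2 Wg]]]] HW2 [h1 [h2 [Hh1 [Hh2 Wh]]]].
  destruct (HW1 g1 g2 Hg1 Hg2 Wg) as [k1 [e1 [He1 U1]]].
  destruct (HW2 h1 h2 Hh1 Hh2 Wh) as [k2 [e2 [He2 U2]]].
  set (r := INR k1 + INR k2 + 1).
  pose proof (pos_INR k1); pose proof (pos_INR k2).
  destruct (INR_archimed (Rabs a) (2 * r) (Rabs_pos_lt a Ha)) as [n Hn].
  set (L := INR n * a).
  assert (HL : 2 * r < Rabs L)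
    by (unfold L; rewrite Rabs_mult, (Rabs_pos_eq (INR n)) by apply pos_INR; lra).
  destruct (smooth_glue g1 h1 r L ltac:(unfold r; lra) HL Hg1 Hh1) as [f1 [Hf1 [A1 B1]]].
  destruct (smooth_glue g2 h2 r L ltac:(unfold r; lra) HL Hg2 Hh2) as [f2 [Hf2 [A2 B2]]].
  exists n, f1, f2; repeat split; [exact Hf1|exact Hf2| |].
  - apply U1; auto; apply (pball_of_agree _ _ _ _ r); auto; unfold r; lra.
  - rewrite !iter_transl; fold L.
    apply U2; try apply smooth_transl; auto;
      apply (pball_of_agree _ _ _ _ r); auto; unfold r; lra.
Qed.

Lemma openX_lt_at_0 (c : R) : openX (fun g => g 0 < c).
Proof.
  intros f _ Hf; exists 0%nat, (c - f 0); split; [lra|].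
  intros g _ Hg; specialize (Hg 0%nat 0 (le_n 0) ltac:(simpl; lra)); simpl in Hg.
  apply Rabs_def2 in Hg; lra.
Qed.

Lemma no_hypercyclic_algebra_of_positive (T : (R -> R) -> (R -> R)) :
  (forall f, (forall x, 0 <= f x) -> forall x, 0 <= T f x) ->
  ~ supports_hypercyclic_algebra T.
Proof.
  intros Tpos [A [[_ [_ [_ [_ Amul]]]] [[f [Af Hf]] Hdense]]].
  set (f2 := fun x => f x * f x).
  assert (Hf2 : f2 <> (fun _ => 0)).
  { intros E; apply Hf, functional_extensionality; intros x.
    apply (f_equal (fun F => F x)) in E; unfold f2 in E; nra. }
  assert (orbit_nonneg : forall n x, 0 <= Nat.iter n T f2 x).
  { induction n as [|n IH]; [intros x; unfold f2; simpl; nra|].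
    intros x; apply Tpos, IH. }
  destruct (Hdense f2 (Amul f f Af Af) Hf2 (fun g => g 0 < -1)) as [n Hn].
  - apply openX_lt_at_0.
  - exists (fun _ => -2); split; [apply smooth_const|lra].
  - pose proof (orbit_nonneg n 0); lra.
Qed.

Theorem corollary17 (a : R) (ha : a <> 0) :
  weakly_mixing (transl a) /\ ~ supports_hypercyclic_algebra (transl a).
Proof.
  split.
  - exact (transl_weakly_mixing a ha).
  - apply no_hypercyclic_algebra_of_positive; intros f Hf x; apply Hf.
Qed.
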